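(* Let $p$ be an odd prime. Then the sequence $\left(\left\lfloor n^{p-1}/p \right\rfloor\right)_{n \ge 1}$ is eventually prime-free.
   Context: A sequence $(a_n)_{n\ge 1}$ of positive integers is called eventually prime-free if there exists an index $n_0$ such that $a_n$ is composite for all $n \ge n_0$. (Here, as in the paper, this is understood as: only finitely many terms $a_n$ are prime.) *)

From mathcomp Require Import all_boot.
Set Implicit Arguments.
Unset Strict Implicit.
Unset Printing Implicit Defensive.

Definition eventually_prime_free (a : nat -> nat) : Prop :=
  exists n0 : nat, forall n : nat, n0 <= n -> ~~ prime (a n).

From mathcomp Require Import all_boot.
From mathcomp Require Import cyclic zify.

(* Write p - 1 = 2k and N = n^k, so that n^(p-1) = N^2.  If p divides n, then
   p divides N and N^2 / p = N * (N / p).  Otherwise Fermat's little theorem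
   gives N^2 = 1 (mod p), so the floor of N^2 / p is (N - 1)(N + 1) / p and p
   divides one of the factors N - 1, N + 1.  Either way the quotient is a
   product of two factors at least 2 as soon as N > 2p. *)

Lemma muln_not_prime a b : 1 < a -> 1 < b -> ~~ prime (a * b).
Proof.
move=> a_gt1 b_gt1; apply/negP => /primeP [_ /(_ a (dvdn_mulr b (dvdnn a)))].
by case/orP => /eqP; nia.
Qed.

Lemma divn_mul_not_prime d a b :
  0 < d -> d %| a -> 2 * d <= a -> 1 < b -> ~~ prime (a * b %/ d).
Proof.
move=> d_gt0 dvd_da le_2d_a b_gt1; rewrite -divn_mulAC //.
by apply: muln_not_prime b_gt1; rewrite leq_divRL // mulnC.
Qed.

Lemma sqr_divn_prime_not_prime p N :
  prime p -> p %| N \/ N ^ 2 = 1 %[mod p] -> 2 * p < N -> ~~ prime (N ^ 2 %/ p).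
Proof.
move=> p_pr [p_dvd_N | sqrN_eq1] lt_2p_N; have p_gt0 := prime_gt0 p_pr.
  by apply: divn_mul_not_prime; lia.
have sqrN_gt0 : 0 < N ^ 2 by rewrite expn_gt0; lia.
have p_dvd_sqrN_sub1 : p %| N ^ 2 - 1 by rewrite -eqn_mod_dvd // sqrN_eq1.
rewrite -(subnK sqrN_gt0) divnDl // (divn_small (prime_gt1 p_pr)) addn0.
move: p_dvd_sqrN_sub1; rewrite -{2}(exp1n 2) subn_sqr Euclid_dvdM //.
case/orP => [p_dvd | p_dvd].
  by apply: divn_mul_not_prime; lia.
by rewrite mulnC; apply: divn_mul_not_prime; lia.
Qed.

Lemma fermat_little_pred p n : prime p -> ~~ (p %| n) -> n ^ (p - 1) = 1 %[mod p].
Proof.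
move=> p_pr p_ndvd_n; rewrite subn1 -totient_prime //.
by apply: Euler_exp_totient; rewrite coprime_sym prime_coprime.
Qed.

Theorem theorem9 (p : nat) (hp : prime p) (hodd : odd p) :
  eventually_prime_free (fun n => n ^ (p - 1) %/ p).
Proof.
have p_gt1 := prime_gt1 hp.
have p_half := odd_double_half p; rewrite hodd -muln2 in p_half.
have p_sub1 : p - 1 = p./2 * 2 by lia.
exists (2 * p + 1) => n n_ge; rewrite p_sub1 expnM.
apply: sqr_divn_prime_not_prime => //.
  have [p_dvd_n | p_ndvd_n] := boolP (p %| n); first by left; apply: dvdn_exp; lia.
  by right; rewrite -expnM -p_sub1 fermat_little_pred.
apply: leq_trans (_ : n ^ 1 <= _); first by rewrite expn1; lia.
by rewrite leq_pexp2l; lia.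
Qed.
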